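(* Let $\mathfrak{g}$ be a symmetric social storage network on $N$ agents with stability point $\hat\eta$, which has evolved from the null network. Suppose $\hat\eta$ is odd and $\mathfrak{g}$ has $\kappa\ge2$ connected components. Suppose at least two of the components each have either at most $\hat\eta$ agents, or an odd number of agents greater than $\hat\eta$. Then $\mathfrak{g}$ is not bilaterally stable.
   Context: A network is a simple undirected graph on a finite set $\mathbf{A}$ of $N$ agents, and $\eta_i(\mathfrak{g})$ is the degree (neighbourhood size) of $i$. Parameters are: disk failure rate $\lambda\in(0,1)$, per-link cost $c$, data worths $\beta_i>0$, storage $s_i$, data size $d_i$ and budget $b_i$. Remaining storage is $RS_i=s_i-\sum_{j\text{ neighbour of }i}d_j$ and remaining budget is $RB_i=b_i-c\,\eta_i(\mathfrak{g})$. A symmetric social storage network is one of the following four types. (a) SVN with sufficient storage under the Multi-Objective Framework (MO): - $\beta_i=\beta$, with $\beta,\lambda,c\in(0,1)$; - $s_i\ge\sum_{j\ne i}d_j$; - $u_i=\beta(1-\lambda^{\eta_i})-c\eta_i$; - it is assumed that $c<\beta(1-\lambda)$ and $L=|\ln(c/(\beta(1-\lambda)))|/|\ln\lambda|$ is not an integer; the stability point is $\hat\eta=\lceil L\rceil$. (b) SV-SRN under MO: - as in (a) but with $s_i=s$ and $d_i=d$ (with $s/d$ an integer) instead of sufficient storage; - the stability point is $\hat\eta=\min\{\lceil L\rceil,s/d\}$. (c) SVN with sufficient storage and budget under the Single-Objective Framework (SO): - $\beta_i=\beta$; - $s_i\ge\sum_{j\ne i}d_j$ and $b_i\ge c(N-1)$;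 - $u_i=\beta(1-\lambda^{\eta_i})$; - the stability point is $\hat\eta=N-1$. (d) SRN under SO: - $s_i=s$, $d_i=d$, $b_i=b$ (with $s/d$ and $b/c$ integers); - $u_i=\beta_i(1-\lambda^{\eta_i})$; - the stability point is $\hat\eta=\min\{s/d,b/c\}$. Agent $i$ is willing to add the link $\langle ij\rangle$ if $u_i(\mathfrak{g}+\langle ij\rangle)>u_i(\mathfrak{g})$, together with $RS_j\ge d_i$ in types (b) and (d), and additionally $RB_i\ge c$ in type (d). Bilateral stability means both of the following hold. 1. For every link $\langle ij\rangle$: if $u_i(\mathfrak{g}-\langle ij\rangle)>u_i(\mathfrak{g})$, then $u_j(\mathfrak{g}-\langle ij\rangle)<u_j(\mathfrak{g})$. 2. For every non-link $\langle ij\rangle$: if $i$ is willing to add $\langle ij\rangle$, then $j$ is not willing to add $\langle ij\rangle$. $\mathfrak{g}$ has evolved from the null network if it is obtained from the network with no links by a finite sequence of single link additions $\langle ij\rangle$, each performed only when both $i$ and $j$ are willing to add it at that moment. *)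

From HB Require Import structures.
From mathcomp Require Import all_boot all_order all_algebra.
From mathcomp Require Import reals exp.
Set Implicit Arguments. Unset Strict Implicit. Unset Printing Implicit Defensive.
Import Order.TTheory GRing.Theory Num.Theory.
Local Open Scope ring_scope.

Section SocialStorage.
Variables (R : realType) (N : nat).

(* A network: a set of undirected links, each link being a 2-element set. *)
Definition network := {set {set 'I_N}}.

Definition adj (g : network) : rel 'I_N := fun i j => [set i; j] \in g.
Definition add_link (g : network) (i j : 'I_N) : network := g :|: [set [set i; j]].
Definition del_link (g : network) (i j : 'I_N) : network := g :\ [set i; j].
Definition null_network : network := set0.

Definition degree (g : network) (i : 'I_N) : nat := #|[set j | adj g i j]|.

Definition components (g : network) : {set {set 'I_N}} :=
  [set [set j | connect (adj g) i j] | i : 'I_N].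

Record params := Params {
  lam : R;                 (* disk failure rate lambda *)
  cost : R;                (* per-link cost c *)
  beta : 'I_N -> R;        (* data worths beta_i *)
  stor : 'I_N -> R;
  dsize : 'I_N -> R;
  budget : 'I_N -> R
}.

Inductive ssn_type := SVN_MO | SVSRN_MO | SVN_SO | SRN_SO.

Variable p : params.

Definition RS (g : network) (i : 'I_N) : R :=
  stor p i - \sum_(j | adj g i j) dsize p j.
Definition RB (g : network) (i : 'I_N) : R :=
  budget p i - cost p * (degree g i)%:R.

Definition Lval (b : R) : R :=
  `|ln (cost p / (b * (1 - lam p)))| / `|ln (lam p)|.
Definition ceil_nat (x : R) : nat := `|Num.ceil x|%N.

Definition symmetric_SSN (ty : ssn_type) (eta_hat : nat) : Prop :=
  [/\ 0 < lam p < 1, (forall i, 0 < beta p i) &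
  match ty with
  | SVN_MO => exists b : R,
      [/\ (forall i, beta p i = b), 0 < b < 1, 0 < cost p < 1 &
          (forall i, \sum_(j | j != i) dsize p j <= stor p i)] /\
      [/\ cost p < b * (1 - lam p),
          (forall z : int, Lval b != z%:~R) &
          eta_hat = ceil_nat (Lval b)]
  | SVSRN_MO => exists (b s d : R) (k : nat),
      [/\ (forall i, beta p i = b), 0 < b < 1, 0 < cost p < 1,
          (forall i, stor p i = s /\ dsize p i = d) &
          (0 < d /\ s / d = k%:R)] /\
      [/\ cost p < b * (1 - lam p),
          (forall z : int, Lval b != z%:~R) &
          eta_hat = minn (ceil_nat (Lval b)) k]
  | SVN_SO => exists b : R,
      [/\ (forall i, beta p i = b),
          (forall i, \sum_(j | j != i) dsize p j <= stor p i),
          (forall i, cost p * (N - 1)%:R <= budget p i) &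
          eta_hat = (N - 1)%N]
  | SRN_SO => exists (s d b : R) (k1 k2 : nat),
      [/\ (forall i, [/\ stor p i = s, dsize p i = d & budget p i = b]),
          0 < d /\ 0 < cost p, s / d = k1%:R, b / cost p = k2%:R &
          eta_hat = minn k1 k2]
  end].

Definition is_MO (ty : ssn_type) : bool :=
  match ty with SVN_MO | SVSRN_MO => true | _ => false end.

Definition util (ty : ssn_type) (g : network) (i : 'I_N) : R :=
  let e := degree g i in
  if is_MO ty then beta p i * (1 - lam p ^+ e) - cost p * e%:R
  else beta p i * (1 - lam p ^+ e).

Definition willing (ty : ssn_type) (g : network) (i j : 'I_N) : Prop :=
  [/\ util ty g i < util ty (add_link g i j) i,
      (ty = SVSRN_MO \/ ty = SRN_SO -> dsize p i <= RS g j) &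
      (ty = SRN_SO -> cost p <= RB g i)].

Definition bilaterally_stable (ty : ssn_type) (g : network) : Prop :=
  (forall i j, adj g i j ->
     util ty g i < util ty (del_link g i j) i ->
     util ty (del_link g i j) j < util ty g j) /\
  (forall i j, i != j -> ~~ adj g i j ->
     willing ty g i j -> ~ willing ty g j i).

Inductive evolved (ty : ssn_type) : network -> Prop :=
| evolved_null : evolved ty null_network
| evolved_step g i j : evolved ty g -> i != j -> ~~ adj g i j ->
    willing ty g i j -> willing ty g j i -> evolved ty (add_link g i j).

End SocialStorage.

(** Evolution from the null network only ever links two agents whose degrees
    are both below [eta_hat]: in each of the four types, two distinct,
    non-adjacent agents are mutually willing to link exactly when both have
    degree smaller than [eta_hat]. Hence every agent of an evolved network has
    degree at most [eta_hat]. In a component with at most [eta_hat] agents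
    every degree is smaller than [eta_hat]; in a component with an odd number
    of agents the degrees cannot all equal the odd number [eta_hat], because
    the degree sum over a component is even. So each of the two given
    components contains an agent of degree below [eta_hat], and these two
    agents are mutually willing but not linked, against bilateral stability. *)

From HB Require Import structures.
From mathcomp Require Import all_boot all_order all_algebra.
From mathcomp Require Import reals exp.
From mathcomp Require Import ring lra.
Import Order.TTheory GRing.Theory Num.Theory.
Local Open Scope ring_scope.
Set Implicit Arguments. Unset Strict Implicit.

Lemma sum_sym_irrefl_even (n : nat) (r : rel 'I_n) (A : {pred 'I_n}) :
  symmetric r -> irreflexive r ->
  ~~ odd (\sum_(i in A) \sum_(j in A) (r i j : nat)).
Proof.
move=> r_sym r_irr.
have split_pair i j :
    (r i j : nat) = ((r i j && (i < j)) + (r j i && (j < i)))%N.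
  rewrite (r_sym j i); case: (ltngtP i j) => [||/val_inj->];
    by rewrite ?andbF ?andbT ?addn0 ?r_irr.
under eq_bigr => i _ do under eq_bigr => j _ do rewrite split_pair.
under eq_bigr => i _ do rewrite big_split /=.
by rewrite big_split /= [X in (_ + X)%N]exchange_big addnn odd_double.
Qed.

Section Networks.
Variable N : nat.
Implicit Types (g : network N) (C : {set 'I_N}) (i j k l : 'I_N).

Lemma adj_sym g : symmetric (adj g).
Proof. by move=> i j; rewrite /adj setUC. Qed.

Lemma eq_set2r i j k : i != j -> ([set i; k] == [set i; j]) = (k == j).
Proof.
move=> neq_ij; apply/eqP/eqP => [eq_ik_ij|->//].
have: k \in [set i; j] by rewrite -eq_ik_ij !inE eqxx orbT.
rewrite !inE => /orP[/eqP eq_ki|/eqP//].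
have: j \in [set i; k] by rewrite eq_ik_ij !inE eqxx orbT.
by rewrite !inE eq_ki orbb => /eqP eq_ji; rewrite eq_ji eqxx in neq_ij.
Qed.

Lemma add_linkC g i j : add_link g i j = add_link g j i.
Proof. by rewrite /add_link (setUC [set i]). Qed.

Lemma adj_add_link g i j k l :
  adj (add_link g i j) k l = adj g k l || ([set k; l] == [set i; j]).
Proof. by rewrite /adj /add_link !inE. Qed.

Lemma add_link_irreflexive g i j :
  i != j -> irreflexive (adj g) -> irreflexive (adj (add_link g i j)).
Proof.
move=> neq_ij g_irr k; rewrite adj_add_link g_irr /=.
apply/negbTE/eqP => eq_kk_ij.
have: i \in [set k; k] by rewrite eq_kk_ij !inE eqxx.
have: j \in [set k; k] by rewrite eq_kk_ij !inE eqxx orbT.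
rewrite !inE !orbb => /eqP eq_jk /eqP eq_ik.
by rewrite eq_ik eq_jk eqxx in neq_ij.
Qed.

Lemma degree_add_link_l g i j : i != j -> ~~ adj g i j ->
  degree (add_link g i j) i = (degree g i).+1.
Proof.
move=> neq_ij nadj_ij; rewrite /degree.
have -> : [set l | adj (add_link g i j) i l] = j |: [set l | adj g i l].
  by apply/setP => l; rewrite !inE adj_add_link eq_set2r // orbC.
by rewrite cardsU1 inE (negbTE nadj_ij).
Qed.

Lemma degree_add_link_other g i j k : k != i -> k != j ->
  degree (add_link g i j) k = degree g k.
Proof.
move=> neq_ki neq_kj; apply: eq_card => l; rewrite !inE adj_add_link.
case: eqP => [eq_kl_ij|]; last by rewrite orbF.
have: k \in [set i; j] by rewrite -eq_kl_ij !inE eqxx.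
by rewrite !inE (negbTE neq_ki) (negbTE neq_kj).
Qed.

Lemma degree_lt_pred g i j : irreflexive (adj g) -> i != j -> ~~ adj g i j ->
  (degree g i < N - 1)%N.
Proof.
move=> g_irr neq_ij nadj_ij.
rewrite subn1 -[X in X.-1](card_ord N) -(cardsC1 i).
apply: proper_card; apply/properP; split.
  by apply/subsetP => l; rewrite !inE; apply: contraTneq => ->; rewrite g_irr.
by exists j; rewrite !inE 1?eq_sym ?(negbTE nadj_ij).
Qed.

Lemma componentE g C i : C \in components g -> i \in C ->
  C = [set j | connect (adj g) i j].
Proof.
have sym := sym_connect_sym (adj_sym g).
case/imsetP => i0 _ ->; rewrite inE => conn_i0i.
apply/setP => j; rewrite !inE; apply/idP/idP => [conn_i0j|].
  by apply: connect_trans conn_i0j; rewrite sym.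
exact: connect_trans.
Qed.

Lemma mem_component_connect g C i j : C \in components g -> i \in C ->
  connect (adj g) i j -> j \in C.
Proof. by move=> gC Ci; rewrite (componentE gC Ci) inE. Qed.

Lemma component_connect_eq g C1 C2 i j :
  C1 \in components g -> C2 \in components g -> i \in C1 -> j \in C2 ->
  connect (adj g) i j -> C1 = C2.
Proof.
move=> gC1 gC2 C1i C2j conn_ij.
rewrite (componentE gC2 C2j) -(componentE gC1) //.
exact: mem_component_connect conn_ij.
Qed.

Lemma component_neq0 g C : C \in components g -> exists i, i \in C.
Proof. by case/imsetP => i _ ->; exists i; rewrite inE connect0. Qed.

Lemma degree_component g C i : C \in components g -> i \in C ->
  degree g i = (\sum_(j in C) (adj g i j : nat))%N.
Proof.
move=> gC Ci; rewrite /degree -sum1_card big_mkcond [RHS]big_mkcond /=.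
apply: eq_bigr => j _; rewrite inE.
case adj_ij: (adj g i j); last by case: (j \in C).
by rewrite (mem_component_connect gC Ci (connect1 adj_ij)).
Qed.

Lemma degree_lt_card_component g C i : irreflexive (adj g) ->
  C \in components g -> i \in C -> (degree g i < #|C|)%N.
Proof.
move=> g_irr gC Ci; rewrite (cardsD1 i C) Ci ltnS.
apply/subset_leq_card/subsetP => j; rewrite !inE => adj_ij.
rewrite (mem_component_connect gC Ci (connect1 adj_ij)) andbT.
by apply: contraTneq adj_ij => ->; rewrite g_irr.
Qed.

Lemma exists_degree_lt_component g C eh :
  irreflexive (adj g) -> (forall k, degree g k <= eh)%N -> odd eh ->
  C \in components g -> (#|C| <= eh)%N || (odd #|C| && (eh < #|C|)%N) ->
  exists2 i, i \in C & (degree g i < eh)%N.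
Proof.
move=> g_irr deg_le odd_eh gC /orP[le_C_eh|/andP[odd_C _]].
  have [i Ci] := component_neq0 gC; exists i => //.
  exact: leq_trans (degree_lt_card_component g_irr gC Ci) le_C_eh.
apply/exists_inP/contraT; rewrite negb_exists_in => /forall_inP deg_ge.
have := sum_sym_irrefl_even C (adj_sym g) g_irr.
rewrite (eq_bigr (fun=> eh)) ?sum_nat_const ?oddM ?odd_C ?odd_eh // => i Ci.
rewrite -degree_component //; apply/eqP; rewrite eqn_leq deg_le.
by rewrite leqNgt deg_ge.
Qed.

End Networks.

Section SocialStorage.
Variables (R : realType) (N : nat) (p : params R N).
Implicit Types (g : network N) (i j k : 'I_N).

Lemma ltr_nat_ceil_nat (x : R) (e : nat) : 0 <= x ->
  (e%:R < x) = (e < ceil_nat x)%N.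
Proof.
move=> x_ge0; have ceil_ge0 : 0 <= Num.ceil x by rewrite ceil_ge0; lra.
rewrite /ceil_nat -ltz_nat gez0_abs // ltNge [in RHS]ltNge ceil_le_int.
by rewrite -ltNge -[e%:R]/(e%:Z%:~R).
Qed.

Lemma ler_sub_mul_nat (x y : R) (k n : nat) : 0 < x -> y / x = k%:R ->
  (x <= y - x * n%:R) = (n < k)%N.
Proof.
move=> x_gt0 yx_k; have -> : y = k%:R * x by rewrite -yx_k divfK ?gt_eqF.
rewrite lerBrDr; have -> : x + x * n%:R = n.+1%:R * x by rewrite -natr1; ring.
by rewrite ler_pM2r // ler_nat.
Qed.

Section MultiObjective.
Variable b : R.
Hypotheses (b_gt0 : 0 < b) (lam_gt0 : 0 < lam p) (lam_lt1 : lam p < 1).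
Hypotheses (cost_gt0 : 0 < cost p) (cost_lt : cost p < b * (1 - lam p)).

Let payoff (e : nat) : R := b * (1 - lam p ^+ e) - cost p * e%:R.

Lemma payoff_ltS_exp (e : nat) :
  (payoff e < payoff e.+1) = (cost p / (b * (1 - lam p)) < lam p ^+ e).
Proof.
have bl_gt0 : 0 < b * (1 - lam p) by rewrite mulr_gt0 // subr_gt0.
have gain : payoff e.+1 - payoff e = lam p ^+ e * (b * (1 - lam p)) - cost p.
  by rewrite /payoff exprS -natr1; ring.
by rewrite ltr_pdivrMr // -subr_gt0 gain subr_gt0.
Qed.

Lemma payoff_ltS (e : nat) :
  (payoff e < payoff e.+1) = (e < ceil_nat (Lval p b))%N.
Proof.
have bl_gt0 : 0 < b * (1 - lam p) by rewrite mulr_gt0 // subr_gt0.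
set x := cost p / (b * (1 - lam p)).
have x_gt0 : 0 < x by rewrite divr_gt0.
have x_lt1 : x < 1 by rewrite ltr_pdivrMr // mul1r.
have ln_x_lt0 : ln x < 0 by rewrite ln_lt0 // x_gt0.
have ln_lam_lt0 : ln (lam p) < 0 by rewrite ln_lt0 // lam_gt0.
rewrite payoff_ltS_exp -ltr_ln ?posrE ?exprn_gt0 // lnXn //.
rewrite -ltr_nat_ceil_nat ?divr_ge0 // /Lval -/x.
rewrite !ler0_norm ?ltW // ltr_pdivlMr ?oppr_gt0 // -mulr_natl.
by apply/idP/idP => ?; nra.
Qed.

Lemma util_add_link_MO ty g i j : is_MO ty -> beta p i = b ->
  i != j -> ~~ adj g i j ->
  (util p ty g i < util p ty (add_link g i j) i)
    = (degree g i < ceil_nat (Lval p b))%N.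
Proof.
move=> MO_ty beta_i neq_ij nadj_ij.
by rewrite /util MO_ty beta_i degree_add_link_l // payoff_ltS.
Qed.

End MultiObjective.

Lemma util_add_link_SO ty g i j :
  ~~ is_MO ty -> 0 < lam p < 1 -> 0 < beta p i ->
  i != j -> ~~ adj g i j -> util p ty g i < util p ty (add_link g i j) i.
Proof.
move=> /negbTE SO_ty /andP[lam_gt0 lam_lt1] beta_gt0 neq_ij nadj_ij.
rewrite /util SO_ty degree_add_link_l // ltr_pM2l // ltrD2l ltrN2 exprS.
by rewrite gtr_pMl // exprn_gt0.
Qed.

Lemma storage_roomE g i j (s d : R) (k : nat) :
  (forall l, stor p l = s /\ dsize p l = d) -> 0 < d -> s / d = k%:R ->
  (dsize p i <= RS p g j) = (degree g j < k)%N.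
Proof.
move=> sd d_gt0 sdk.
rewrite /RS (sd j).1 (sd i).2 -(ler_sub_mul_nat _ d_gt0 sdk).
suff -> : \sum_(l | adj g j l) dsize p l = d * (degree g j)%:R by [].
rewrite (eq_bigr (fun=> d)) => [|l _]; last exact: (sd l).2.
by rewrite sumr_const mulr_natr /degree cardsE.
Qed.

Lemma budget_roomE g i (bi : R) (k : nat) :
  budget p i = bi -> 0 < cost p -> bi / cost p = k%:R ->
  (cost p <= RB p g i) = (degree g i < k)%N.
Proof.
move=> budget_i cost_gt0 bk.
by rewrite /RB budget_i (ler_sub_mul_nat _ cost_gt0 bk).
Qed.

Lemma willing_unconstrained ty g i j : ty = SVN_MO \/ ty = SVN_SO ->
  willing p ty g i j <-> util p ty g i < util p ty (add_link g i j) i.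
Proof. by case=> ->; split=> [[]//|gain]; split=> //; case. Qed.

Lemma willing_SVSRN_MO g i j : willing p SVSRN_MO g i j <->
  util p SVSRN_MO g i < util p SVSRN_MO (add_link g i j) i /\
  dsize p i <= RS p g j.
Proof. by split=> [[gain /(_ (or_introl erefl))]|[gain room]]. Qed.

Lemma willing_SRN_SO g i j : willing p SRN_SO g i j <->
  [/\ util p SRN_SO g i < util p SRN_SO (add_link g i j) i,
      dsize p i <= RS p g j & cost p <= RB p g i].
Proof.
by split=> [[gain /(_ (or_intror erefl)) room /(_ erefl)]|[gain room budget]].
Qed.

Lemma mutually_willingE ty eh g i j : symmetric_SSN p ty eh ->
  irreflexive (adj g) -> i != j -> ~~ adj g i j ->
  willing p ty g i j /\ willing p ty g j i <->
  (degree g i < eh)%N /\ (degree g j < eh)%N.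
Proof.
move=> [lam01 beta_gt0 HS] g_irr neq_ij nadj_ij.
have neq_ji : j != i by rewrite eq_sym.
have nadj_ji : ~~ adj g j i by rewrite adj_sym.
have /andP[lam_gt0 lam_lt1] := lam01.
case: ty HS => [[b [[beta_b /andP[b_gt0 _] /andP[c_gt0 _] _] [cb _ ->]]]
  | [b [s [d [k [[beta_b /andP[b_gt0 _] /andP[c_gt0 _] sd [d_gt0 sdk]]
                 [cb _ ->]]]]]]
  | [_ [_ _ _ ->]]
  | [s [d [b [k1 [k2 [sdb [d_gt0 c_gt0] sdk1 bk2 ->]]]]]]].
- by rewrite !willing_unconstrained ?(util_add_link_MO b_gt0) ?beta_b //; left.
- rewrite !willing_SVSRN_MO !(util_add_link_MO b_gt0) ?beta_b //.
  rewrite !(storage_roomE _ _ _ sd d_gt0 sdk) !leq_min.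
  by split=> [[[-> ->] [-> ->]]|[/andP[-> ->] /andP[-> ->]]].
- rewrite !willing_unconstrained; try by right.
  split=> _; split.
  + exact: degree_lt_pred g_irr neq_ij nadj_ij.
  + exact: degree_lt_pred g_irr neq_ji nadj_ji.
  + exact: (util_add_link_SO (ty:=SVN_SO) isT lam01 (beta_gt0 i)
             neq_ij nadj_ij).
  + exact: (util_add_link_SO (ty:=SVN_SO) isT lam01 (beta_gt0 j)
             neq_ji nadj_ji).
- have sd l : stor p l = s /\ dsize p l = d by case: (sdb l).
  have budget_b l : budget p l = b by case: (sdb l).
  rewrite !willing_SRN_SO !(storage_roomE _ _ _ sd d_gt0 sdk1).
  rewrite !(budget_roomE _ (budget_b _) c_gt0 bk2) !leq_min.
  have gain_ij :=
    util_add_link_SO (ty:=SRN_SO) isT lam01 (beta_gt0 i) neq_ij nadj_ij.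
  have gain_ji :=
    util_add_link_SO (ty:=SRN_SO) isT lam01 (beta_gt0 j) neq_ji nadj_ji.
  by split=> [[[_ -> ->] [_ -> ->]]|[/andP[-> ->] /andP[-> ->]]].
Qed.

Lemma evolved_degree_le ty eh g : symmetric_SSN p ty eh -> evolved p ty g ->
  irreflexive (adj g) /\ forall k, (degree g k <= eh)%N.
Proof.
move=> HS; elim=> [|{}g i j _ [g_irr deg_le] neq_ij nadj_ij will_ij will_ji].
  split=> k; first by rewrite /adj inE.
  suff -> : degree (null_network N) k = 0%N by [].
  by apply/eqP; rewrite cards_eq0; apply/eqP/setP => l; rewrite !inE /adj inE.
have [lt_i lt_j] :=
  (mutually_willingE HS g_irr neq_ij nadj_ij).1 (conj will_ij will_ji).
split=> [|k]; first exact: add_link_irreflexive.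
have [->|neq_ki] := eqVneq k i; first by rewrite degree_add_link_l.
have [->|neq_kj] := eqVneq k j; last by rewrite degree_add_link_other // deg_le.
by rewrite add_linkC degree_add_link_l // 1?eq_sym // adj_sym.
Qed.

End SocialStorage.

Unset Implicit Arguments. Set Strict Implicit.

Theorem proposition3 (R : realType) (N : nat) (ty : ssn_type)
    (p : params R N) (eta_hat : nat) (g : network N) :
  symmetric_SSN p ty eta_hat ->
  evolved p ty g ->
  odd eta_hat ->
  (2 <= #|components g|)%N ->
  (exists C1 C2, [/\ C1 \in components g, C2 \in components g, C1 != C2,
      (#|C1| <= eta_hat)%N || (odd #|C1| && (eta_hat < #|C1|)%N) &
      (#|C2| <= eta_hat)%N || (odd #|C2| && (eta_hat < #|C2|)%N)]) ->
  ~ bilaterally_stable p ty g.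
Proof.
move=> HS g_evolved odd_eh _ [C1 [C2 [gC1 gC2 neq_C12 size_C1 size_C2]]].
move=> [_ stable_nonlinks].
have [g_irr deg_le] := evolved_degree_le HS g_evolved.
have [i C1i lt_i] := exists_degree_lt_component g_irr deg_le odd_eh gC1 size_C1.
have [j C2j lt_j] := exists_degree_lt_component g_irr deg_le odd_eh gC2 size_C2.
have nconn_ij : ~~ connect (adj g) i j.
  by apply: contra neq_C12 => /(component_connect_eq gC1 gC2 C1i C2j)->.
have neq_ij : i != j by apply: contraNneq nconn_ij => ->; apply: connect0.
have nadj_ij : ~~ adj g i j by apply: contraNN nconn_ij; apply: connect1.
have [] := (mutually_willingE HS g_irr neq_ij nadj_ij).2 (conj lt_i lt_j).
exact: stable_nonlinks.
Qed.
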